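(* Let $f:\{0,1\}^n\to\mathbb{R}$ be any function whose set of global maxima (optima) has size polynomial in $n$. Then the (1+1)~IA$^{\text{hyp}}$ using static hypermutation without FCM needs expected time exponential in $n$ (i.e. $e^{\Omega(n)}$) to find any of the optima.
   Context: The (1+1)~IA$^{\text{hyp}}$ maximises $f:\{0,1\}^n\to\mathbb{R}$: it initialises a single bit string $x$ uniformly at random; in each iteration it creates $y$ from $x$ by static hypermutation and replaces $x$ by $y$ if $f(y)\ge f(x)$. Static hypermutation has a constant parameter $0<c\le 1$ and mutation potential $M=cn$ (an integer). Without FCM (stop at first constructive mutation), static hypermutation creates $y$ by flipping exactly $M$ distinct bit positions of $x$ chosen uniformly at random. Time is measured in the number of iterations/fitness evaluations until an optimum is sampled. *)

From HB Require Import structures.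
From mathcomp Require Import all_boot all_order all_algebra.
From mathcomp Require Import all_classical all_reals all_analysis.
Set Implicit Arguments. Unset Strict Implicit. Unset Printing Implicit Defensive.
Import Order.TTheory GRing.Theory Num.Theory.
Local Open Scope ring_scope.

Definition bits (n : nat) := {ffun 'I_n -> bool}.

Definition flip n (x : bits n) (S : {set 'I_n}) : bits n :=
  [ffun i => if i \in S then ~~ x i else x i].

(* Static hypermutation without FCM: choose a set S of exactly M distinct
   positions uniformly at random (among the 'C(n,M) such sets) and flip them.
   hyp_prob n M x y = probability that the mutant of x is y. *)
Definition hyp_prob (R : realType) n (M : nat) (x y : bits n) : R :=
  #|[set S : {set 'I_n} | (#|S| == M) && (flip x S == y)]|%:R / ('C(n, M))%:R.

Definition optima (R : realType) n (f : bits n -> R) : {set bits n} :=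
  [set x | [forall y, f y <= f x]].

(* surv f M t x = probability that during the first t+1 fitness evaluations
   (the initial one plus t iterations) no optimum has been sampled AND the
   current search point after t iterations is x. *)
Fixpoint surv (R : realType) n (f : bits n -> R) (M : nat) (t : nat)
  : {ffun bits n -> R} :=
  match t with
  | 0 => [ffun x => if x \in optima f then 0 else (2%:R ^+ n)^-1]
  | t'.+1 => [ffun z =>
       \sum_(x : bits n) \sum_(y : bits n |
            (y \notin optima f) && (z == (if f x <= f y then y else x)))
          surv f M t' x * hyp_prob R M x y]
  end.

(* P(T > t), where T = number of fitness evaluations (the initial sample counts
   as evaluation 1, iteration i as evaluation i+1) until an optimum is sampled. *)
Definition prob_T_gt (R : realType) n (f : bits n -> R) (M : nat) (t : nat) : R :=
  match t with
  | 0 => 1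
  | t'.+1 => \sum_(x : bits n) surv f M t' x
  end.

(* Expected optimisation time E[T] = sum_{t >= 0} P(T > t), in the extended reals
   (it may be +oo). *)
Definition expected_time (R : realType) n (f : bits n -> R) (M : nat) : \bar R :=
  (\sum_(0 <= t <oo) (prob_T_gt f M t)%:E)%E.

From HB Require Import structures.
From mathcomp Require Import all_boot all_order all_algebra.
From mathcomp Require Import all_classical all_reals all_analysis.
From mathcomp Require Import ring lra zify.
Set Implicit Arguments. Unset Strict Implicit. Unset Printing Implicit Defensive.
Import Order.TTheory GRing.Theory Num.Theory.
Local Open Scope ring_scope.

(* Hypermutation without FCM flips one of the 'C(n, M) sets of M positions,
   chosen uniformly, and at most one of them turns x into a given y.  Hence an
   iteration samples one of the K optima with probability at most K / 'C(n, M),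
   and a union bound keeps the probability that no optimum has been sampled
   above 1/2 during 2 e^(an) iterations.  For c < 1 this works with
   a = c ln(1/c) / 2, since 'C(n, cn) >= (1/c)^(cn) while K is polynomial.
   For c = 1 the mutant is always the complement of x; once neither the current
   point nor its complement is optimal, which holds initially with probability
   at least 1 - 2K/2^n, this persists forever. *)

Section Hypermutation.
Variables (R : realType) (n M : nat).
Implicit Types x y : bits n.

Lemma hyp_prob_ge0 x y : 0 <= hyp_prob R M x y.
Proof. by rewrite divr_ge0 ?ler0n. Qed.

Lemma sum_hyp_prob x : (M <= n)%N -> \sum_y hyp_prob R M x y = 1.
Proof.
move=> M_le_n; rewrite -mulr_suml -natr_sum.
have -> : (\sum_y #|[set S : {set 'I_n} | (#|S| == M) && (flip x S == y)]|)%N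
          = #|[set S : {set 'I_n} | #|S| == M]|.
  rewrite -sum1_card (partition_big (flip x) predT) //=.
  by apply: eq_bigr => y _; rewrite -sum1_card; apply: eq_bigl => S; rewrite !inE.
by rewrite card_draws card_ord divff // pnatr_eq0 -lt0n bin_gt0.
Qed.

(* Only the set of positions where x and y differ can turn x into y. *)
Lemma hyp_prob_le x y : hyp_prob R M x y <= ('C(n, M)%:R)^-1.
Proof.
rewrite -[leRHS]mul1r ler_wpM2r ?invr_ge0 ?ler0n // -[leRHS]/(1%:R) ler_nat.
rewrite -(cards1 [set i | x i != y i]); apply: subset_leq_card.
apply/fintype.subsetP => S; rewrite !inE => /andP[_ /eqP <-].
by apply/eqP/setP => i; rewrite !inE ffunE; case: (i \in S); case: (x i).
Qed.

End Hypermutation.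

Lemma card_bits n : #|bits n| = (2 ^ n)%N.
Proof. by rewrite card_ffun card_bool card_ord. Qed.

Definition compl n (x : bits n) : bits n := flip x [set: 'I_n].

Lemma complK n : involutive (@compl n).
Proof. by move=> x; apply/ffunP => i; rewrite !ffunE finset.in_setT negbK. Qed.

Lemma hyp_prob_compl (R : realType) n (x : bits n) : hyp_prob R n x (compl x) = 1.
Proof.
rewrite /hyp_prob.
have -> : [set S : {set 'I_n} | (#|S| == n) && (flip x S == compl x)] = [set [set: 'I_n]].
  apply/setP => S; rewrite !inE; apply/idP/idP => [/andP[/eqP cardS _] | /eqP ->].
    by apply/eqP/eqP; rewrite eqEcard finset.subsetT cardS -[n in (_ <= n)%N]card_ord max_card.
  by rewrite cardsT card_ord !eqxx.
by rewrite cards1 binn divff // pnatr_eq0.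
Qed.

Section Survival.
Variables (R : realType) (n : nat) (f : bits n -> R) (M : nat).
Implicit Types (x y : bits n) (A : {set bits n}).

Definition select x y := if f x <= f y then y else x.

Lemma surv_ge0 t x : 0 <= surv f M t x.
Proof.
elim: t x => [|t IH] x /=; rewrite ffunE.
  by case: ifP => // _; rewrite invr_ge0 exprn_ge0 ?ler0n.
by do 2!apply: sumr_ge0 => ? _; exact: mulr_ge0 (IH _) (hyp_prob_ge0 _ _ _ _).
Qed.

Lemma sum_surv0 A :
  \sum_(x in A) surv f M 0 x = #|A :\: optima f|%:R / 2%:R ^+ n.
Proof.
under eq_bigr do rewrite ffunE.
rewrite (bigID (mem (optima f))) /= big1 => [|x /andP[_ ->] //].
rewrite add0r (eq_bigr (fun=> (2%:R ^+ n)^-1)) => [|x /andP[_ /negbTE ->] //].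
rewrite (eq_bigl (mem (A :\: optima f))) => [|x]; last by rewrite !inE andbC.
by rewrite sumr_const mulr_natl.
Qed.

Lemma sum_survS A t :
  \sum_(z in A) surv f M t.+1 z =
  \sum_x surv f M t x *
    \sum_(y | (y \notin optima f) && (select x y \in A)) hyp_prob R M x y.
Proof.
under eq_bigr do rewrite ffunE.
rewrite exchange_big /=; apply: eq_bigr => x _.
rewrite mulr_sumr; under eq_bigr do rewrite big_mkcond /=.
rewrite exchange_big /= [RHS]big_mkcond /=; apply: eq_bigr => y _.
case: (y \notin optima f) => /=; last by rewrite big1.
rewrite -big_mkcondr /=; case: (boolP (select x y \in A)) => sel_xy.
  by rewrite (big_pred1 (select x y)) // => z /=; case: eqP => [->|]; rewrite ?sel_xy ?andbF.
by rewrite big_pred0 // => z /=; case: eqP => [->|]; rewrite ?(negbTE sel_xy) ?andbF.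
Qed.

Lemma sum_surv0_all :
  \sum_x surv f M 0 x = 1 - #|optima f|%:R / 2%:R ^+ n.
Proof.
rewrite (eq_bigl (fun x => x \in [set: bits n])) => [|x]; last by rewrite inE.
have pow2E : #|optima f|%:R + #|~: optima f|%:R = 2%:R ^+ n :> R.
  by rewrite -natrD cardsC card_bits natrX.
rewrite sum_surv0 finset.setTD -pow2E; field.
by rewrite pow2E gt_eqF // exprn_gt0 ?ltr0n.
Qed.

Lemma sum_survS_all t :
  \sum_x surv f M t.+1 x =
  \sum_x surv f M t x * \sum_(y | y \notin optima f) hyp_prob R M x y.
Proof.
rewrite (eq_bigl (fun x => x \in [set: bits n])) => [|x]; last by rewrite inE.
rewrite sum_survS; apply: eq_bigr => x _; congr (_ * _).
by apply: eq_bigl => y; rewrite finset.in_setT andbT.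
Qed.

Lemma prob_T_gt_ge0 t : 0 <= prob_T_gt f M t.
Proof. by case: t => [|t] //=; apply: sumr_ge0 => x _; exact: surv_ge0. Qed.

(* The first floor(2e)+1 terms of the series are at least 1/2. *)
Lemma expected_time_ge (e : R) : 0 <= e ->
  (forall t : nat, t%:R <= 2 * e -> 1 / 2 <= prob_T_gt f M t) ->
  (e%:E <= expected_time f M)%E.
Proof.
move=> e_ge0 half_le; set T := (Num.trunc (2 * e)).+1.
apply: le_trans (nneseries_lim_ge T _) => [|t _ _]; last by rewrite lee_fin prob_T_gt_ge0.
rewrite sumEFin lee_fin.
have sum_ge : \sum_(0 <= t < T) (1 / 2 : R) <= \sum_(0 <= t < T) prob_T_gt f M t.
  apply: ler_sum_nat => t /andP[_ t_lt_T]; apply: half_le.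
  by rewrite -truncn_ge_nat ?mulr_ge0 // -ltnS.
apply: le_trans sum_ge; rewrite sumr_const_nat subn0 -mulr_natl.
by have := truncnS_gt (2 * e); rewrite -/T; lra.
Qed.

End Survival.

Section UnionBound.
Variables (R : realType) (n : nat) (f : bits n -> R) (M : nat).
Hypothesis M_le_n : (M <= n)%N.
Let K : R := #|optima f|%:R.
Let B : R := 'C(n, M)%:R.

Lemma sum_hyp_prob_nonopt (x : bits n) :
  1 - K / B <= \sum_(y | y \notin optima f) hyp_prob R M x y <= 1.
Proof.
have := sum_hyp_prob R x M_le_n; rewrite (bigID (mem (optima f))) /=.
have hit_ge0 : 0 <= \sum_(y in optima f) hyp_prob R M x y.
  by apply: sumr_ge0 => y _; exact: hyp_prob_ge0.
have hit_le : \sum_(y in optima f) hyp_prob R M x y <= K / B.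
  apply: le_trans (ler_sum _ (fun y _ => hyp_prob_le R M x y)) _.
  by rewrite sumr_const mulr_natl.
lra.
Qed.

Lemma sum_surv_le1 t : \sum_x surv f M t x <= 1.
Proof.
elim: t => [|t IH].
  rewrite sum_surv0_all lerBlDr lerDl divr_ge0 ?ler0n // exprn_ge0 ?ler0n.
rewrite sum_survS_all; apply: le_trans IH; apply: ler_sum => x _.
have /andP[_ avoid_le1] := sum_hyp_prob_nonopt x.
by rewrite -[leRHS]mulr1 ler_wpM2l ?surv_ge0.
Qed.

Lemma sum_survS_ge t :
  \sum_x surv f M t x - K / B <= \sum_x surv f M t.+1 x.
Proof.
have lose_le : \sum_x surv f M t x - K / B <= (\sum_x surv f M t x) * (1 - K / B).
  by rewrite mulrBr mulr1 lerD2l lerN2 ler_piMl ?sum_surv_le1 ?divr_ge0 ?ler0n.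
apply: le_trans lose_le _.
rewrite sum_survS_all mulr_suml; apply: ler_sum => x _.
have /andP[avoid_ge _] := sum_hyp_prob_nonopt x.
by rewrite ler_wpM2l ?surv_ge0.
Qed.

Lemma prob_T_gt_ge t : 1 - K / 2%:R ^+ n - t%:R * (K / B) <= prob_T_gt f M t.
Proof.
have KB_ge0 : 0 <= K / B by rewrite divr_ge0 ?ler0n.
have K2_ge0 : 0 <= K / 2%:R ^+ n by rewrite divr_ge0 ?exprn_ge0 ?ler0n.
case: t => [|t] /=; first lra.
elim: t => [|t IH]; first by rewrite sum_surv0_all; lra.
by apply: le_trans (sum_survS_ge t); move: IH; rewrite -[t.+2%:R]natr1; lra.
Qed.

Lemma half_le_prob_T_gt (e : R) t : 8 * K <= 2%:R ^+ n -> 8 * e * K <= B ->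
  t%:R <= 2 * e -> 1 / 2 <= prob_T_gt f M t.
Proof.
move=> K_small eK_small t_le; apply: le_trans (prob_T_gt_ge t).
have pow2_gt0 : (0 : R) < 2%:R ^+ n by rewrite exprn_gt0 ?ltr0n.
have B_gt0 : 0 < B by rewrite ltr0n bin_gt0.
have K_ge0 : 0 <= K by rewrite ler0n.
have : K / 2%:R ^+ n <= 1 / 8 by rewrite ler_pdivrMr //; lra.
have : t%:R * (K / B) <= 1 / 4.
  have : t%:R * K <= 2 * e * K by rewrite ler_wpM2r.
  by rewrite mulrA ler_pdivrMr //; lra.
lra.
Qed.

End UnionBound.

Section FullPotential.
Variables (R : realType) (n : nat) (f : bits n -> R).

Definition safe : {set bits n} :=
  [set x | (x \notin optima f) && (compl x \notin optima f)].

Lemma select_compl_safe x : x \in safe -> select f x (compl x) \in safe.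
Proof.
by rewrite /select; case: ifP => // _; rewrite !inE complK andbC.
Qed.

Lemma card_safe : (2 ^ n <= #|safe| + 2 * #|optima f|)%N.
Proof.
have -> : safe = ~: (optima f :|: @compl n @^-1: optima f).
  by apply/setP => x; rewrite !inE negb_or.
rewrite -card_bits -(cardsC (optima f :|: @compl n @^-1: optima f)) addnC leq_add2l.
by rewrite cardsU card_preimset; [lia | exact: inv_inj (@complK n)].
Qed.

Lemma sum_surv_safe_le t :
  \sum_(x in safe) surv f n t x <= \sum_(x in safe) surv f n t.+1 x.
Proof.
rewrite sum_survS [leLHS]big_mkcond /=; apply: ler_sum => x _.
have avoid_ge0 y : 0 <= hyp_prob R n x y by apply: hyp_prob_ge0.
case: ifP => safe_x; last by rewrite mulr_ge0 ?surv_ge0 ?sumr_ge0.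
rewrite -[leLHS]mulr1 ler_wpM2l ?surv_ge0 // (bigD1 (compl x)) /=.
  by rewrite hyp_prob_compl lerDl sumr_ge0.
by rewrite select_compl_safe // andbT; move: safe_x; rewrite inE => /andP[].
Qed.

Lemma prob_T_gt_full_ge t :
  1 - 2 * #|optima f|%:R / 2%:R ^+ n <= prob_T_gt f n t.
Proof.
have pow2_gt0 : (0 : R) < 2%:R ^+ n by rewrite exprn_gt0 ?ltr0n.
have K_ge0 : (0 : R) <= #|optima f|%:R by rewrite ler0n.
case: t => [|t] /=; first by rewrite lerBlDr lerDl divr_ge0 ?mulr_ge0 // ltW.
have safe_le_all : \sum_(x in safe) surv f n t x <= \sum_x surv f n t x.
  by rewrite [leRHS](bigID (mem safe)) /= lerDl sumr_ge0 // => x _; apply: surv_ge0.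
apply: le_trans safe_le_all; elim: t => [|t IH]; last exact: le_trans IH (sum_surv_safe_le t).
rewrite sum_surv0 (_ : safe :\: optima f = safe); last first.
  by apply/setP => x; rewrite !inE andbA andbb.
rewrite lerBlDr -mulrDl ler_pdivlMr // mul1r -natrX -natrM -natrD ler_nat.
exact: card_safe.
Qed.

Lemma half_le_prob_T_gt_full t :
  4 * #|optima f|%:R <= 2%:R ^+ n :> R -> 1 / 2 <= prob_T_gt f n t.
Proof.
move=> K_small; have := prob_T_gt_full_ge t.
have pow2_gt0 : (0 : R) < 2%:R ^+ n by rewrite exprn_gt0 ?ltr0n.
have : 2 * #|optima f|%:R / 2%:R ^+ n <= 1 / 2 :> R by rewrite ler_pdivrMr //; lra.
lra.
Qed.

End FullPotential.

Lemma binomial_ge_pow n M : (M <= n)%N -> (n ^ M <= 'C(n, M) * M ^ M)%N.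
Proof.
move=> M_le_n.
(* Each factor (n - i) / (M - i) of n^_m / M^_m is at least n / M. *)
have ffact_ge m : (m <= M)%N -> (n ^ m * M ^_ m <= n ^_ m * M ^ m)%N.
  elim: m => [|m IH] m_lt_M; first by rewrite !ffactn0 !expn0.
  rewrite !expnS !ffactnSr.
  have step : (n * (M - m) <= (n - m) * M)%N by nia.
  by have := leq_mul (IH (ltnW m_lt_M)) step; nia.
rewrite -(leq_pmul2r (fact_gt0 M)) mulnAC bin_ffact -ffactnn.
exact: ffact_ge.
Qed.

Lemma binomial_ge_expR (R : realType) (c : R) n M :
  (0 < n)%N -> (M <= n)%N -> 0 < c -> M%:R = c * n%:R ->
  expR (c * ln c^-1 * n%:R) <= 'C(n, M)%:R.
Proof.
move=> n_gt0 M_le_n c_gt0 M_eq.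
have n_gt0R : (0 : R) < n%:R by rewrite ltr0n.
have M_gt0 : (0 : R) < M%:R by rewrite M_eq mulr_gt0.
have c_inv : c^-1 = n%:R / M%:R by rewrite M_eq invfM mulrCA divff ?mulr1 // gt_eqF.
rewrite mulrAC -M_eq expRM_natl lnK ?posrE ?invr_gt0 // c_inv expr_div_n.
rewrite ler_pdivrMr ?exprn_gt0 // -!natrX -natrM ler_nat.
exact: binomial_ge_pow.
Qed.

(* The degree-(k+1) term of the exponential series dominates D n^k. *)
Lemma poly_le_expR (R : realType) (D s : R) k : 0 < s ->
  exists N, forall n, (N <= n)%N -> D * n%:R ^+ k <= expR (s * n%:R).
Proof.
move=> s_gt0; set a := s ^+ k.+1 / k.+1`!%:R.
have a_gt0 : 0 < a by rewrite divr_gt0 ?exprn_gt0 ?ltr0n ?fact_gt0.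
exists (Num.trunc (D / a)).+1 => n n_ge.
have D_le : D <= a * n%:R.
  rewrite -ler_pdivrMl // mulrC; apply/ltW/(lt_le_trans (truncnS_gt _)).
  by rewrite ler_nat.
apply: le_trans (expR_ge1Dxn k (mulr_ge0 (ltW s_gt0) (ler0n _ n))).
rewrite exprMn mulrAC -/a exprS mulrA.
have := ler_wpM2r (exprn_ge0 k (ler0n R n)) D_le; lra.
Qed.

Theorem theorem1 (R : realType) (c : R) (hc : 0 < c <= 1) (k : nat) (C : R) :
  exists a : R, 0 < a /\
  exists N : nat, forall (n M : nat), (N <= n)%N -> M%:R = c * n%:R ->
    forall f : bits n -> R, #|optima f|%:R <= C * n%:R ^+ k ->
      ((expR (a * n%:R))%:E <= expected_time f M)%E.
Proof.
case/andP: hc => c_gt0 c_le1.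
have ln2_gt0 : (0 : R) < ln 2%:R by rewrite ln_gt0 // ltr1n.
have [N1 poly_le_pow2] := poly_le_expR (8 * C) k ln2_gt0.
have few_optima n (f : bits n -> R) : (N1 <= n)%N ->
    #|optima f|%:R <= C * n%:R ^+ k -> 8 * #|optima f|%:R <= 2%:R ^+ n :> R.
  move=> /poly_le_pow2; rewrite [ln _ * _]mulrC expRM_natl lnK ?posrE ?ltr0n //; lra.
case: ltgtP c_le1 => // [c_lt1 _ | -> _]; last first.
  exists 1; split => //; exists N1 => n M n_ge M_eq f K_le.
  have -> : M = n by apply/eqP; rewrite -(eqr_nat R) M_eq mul1r.
  apply: expected_time_ge (expR_ge0 _) _ => t _; apply: half_le_prob_T_gt_full.
  by have := few_optima n f n_ge K_le; have := ler0n R #|optima f|; lra.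
set L := c * ln c^-1.
have L_gt0 : 0 < L by rewrite mulr_gt0 // ln_gt0 // invf_gt1.
have [N2 poly_le_expL] := poly_le_expR (8 * C) k (divr_gt0 L_gt0 (ltr0n R 2)).
exists (L / 2); split; first by rewrite divr_gt0.
exists (maxn (maxn N1 N2) 1) => n M; rewrite !geq_max => /andP[/andP[n_ge1 n_ge2] n_gt0].
move=> M_eq f K_le.
have M_le_n : (M <= n)%N by rewrite -(ler_nat R) M_eq ler_piMl ?ler0n // ltW.
have binom := binomial_ge_expR n_gt0 M_le_n c_gt0 M_eq.
rewrite -/L {1}(splitr L) mulrDl expRD in binom.
apply: expected_time_ge (expR_ge0 _) _ => t t_le.
apply: (half_le_prob_T_gt M_le_n (few_optima n f n_ge1 K_le) _ t_le).
apply: le_trans _ binom; rewrite mulrAC ler_wpM2r ?expR_ge0 //.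
by have := poly_le_expL n n_ge2; lra.
Qed.
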